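(* Let $A(0)=1$ and $A(n)=nA(n-1)+1$ for $n\ge1$. Then: (i) The map $n\mapsto A(n)$ on $\{0,1,2,\dots\}$ extends uniquely to a continuous function $\tilde A:\mathbb{Z}_2\to\mathbb{Z}_2$. (ii) For each $k\ge1$ there is a unique $c_k\in[0,2^k)\cap\mathbb{Z}$ with $A(c_k)\equiv 0\pmod{2^k}$. (iii) The limit $c=\lim_{k\to\infty}c_k$ exists in $\mathbb{Z}_2$ and is the unique zero of $\tilde A$; its $2$-adic expansion begins $11001110010100010100110001\ldots$ (digits listed from the $2^0$ place upward). (iv) For every $n\in\mathbb{Z}_2$, $|\tilde A(n)|_2=|n-c|_2$.
   Context: $\mathbb{Z}_2$ denotes the $2$-adic integers and $|\cdot|_2$ the $2$-adic absolute value, normalized so that $|x|_2=2^{-v}$ where $2^v$ exactly divides $x$. *)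

From Stdlib Require Import ClassicalEpsilon.
From mathcomp Require Import all_boot all_algebra.
Set Implicit Arguments. Unset Strict Implicit. Unset Printing Implicit Defensive.
Import GRing.Theory Num.Theory.

Fixpoint A (n : nat) : nat :=
  match n with 0 => 1 | m.+1 => m.+1 * A m + 1 end.

(* 2-adic integers as the inverse limit of Z/2^k Z:
   x k is the residue (in [0,2^k)) of x modulo 2^k. *)
Definition Z2 := {x : nat -> nat | forall k, x k < 2 ^ k /\ x k.+1 %% 2 ^ k = x k}.

Definition res (x : Z2) (k : nat) : nat := proj1_sig x k.

Lemma Z2_of_nat_proof (n : nat) :
  forall k, n %% 2 ^ k < 2 ^ k /\ (n %% 2 ^ k.+1) %% 2 ^ k = n %% 2 ^ k.
Proof.
move=> k; split; first by rewrite ltn_pmod // expn_gt0.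
by rewrite modn_dvdm // dvdn_exp2l.
Qed.

Definition Z2_of_nat (n : nat) : Z2 := exist _ (fun k => n %% 2 ^ k) (Z2_of_nat_proof n).

Definition Z2_continuous (f : Z2 -> Z2) : Prop :=
  forall (x : Z2) (k : nat), exists m : nat,
    forall y : Z2, res y m = res x m -> res (f y) k = res (f x) k.

Definition Z2_lim (u : nat -> Z2) (l : Z2) : Prop :=
  forall k, exists N, forall m, N <= m -> res (u m) k = res l k.

(* 2-adic distance |x - y|_2 = 2^(-v), v = 2-adic valuation of x - y;
   v = (least k with x and y different mod 2^k) - 1; distance 0 if x = y. *)
Definition Z2_dist (x y : Z2) : rat :=
  match excluded_middle_informative (exists k, res x k != res y k) with
  | left H => ((2 ^ (ex_minn H).-1)%:R)^-1
  | right _ => 0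
  end.

Definition Z2_abs (x : Z2) : rat := Z2_dist x (Z2_of_nat 0).

Definition Z2_digit (x : Z2) (i : nat) : nat := res x i.+1 %/ 2 ^ i.

Definition c_digits : seq nat :=
  [:: 1; 1; 0; 0; 1; 1; 1; 0; 0; 1; 0; 1; 0; 0; 0; 1; 0; 1; 0; 0; 1; 1; 0; 0; 0; 1].

From Stdlib Require Import NArith ClassicalEpsilon ProofIrrelevance FunctionalExtensionality.
From mathcomp Require Import all_boot ring.

Set Implicit Arguments.
Unset Strict Implicit.
Unset Printing Implicit Defensive.

(* A(n) = sum_(i <= n) n!/(n-i)!, and for even h one has
   A(n + h) = A(n) + n h (mod 2h).  Hence A is 2^k-periodic modulo 2^k and
   extends residue by residue to a continuous map on Z_2.  A root r of A modulo
   2^k (k >= 1) is odd, so the same congruence shows that exactly one of r and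
   r + 2^k is a root modulo 2^(k+1): the roots modulo 2^k form a single class
   c_k, and these classes are the residues of the unique zero c.  Thus
   2^k | A(n) iff n = c (mod 2^k), which is |A(n)|_2 = |n - c|_2.  The digits
   of c are computed from the 30 first terms of the sum, since 2^26 divides 30!. *)

Lemma dvdn_congr d m n : m = n %[mod d] -> (d %| m) = (d %| n).
Proof. by rewrite /dvdn => ->. Qed.

Lemma modn_mul2 d n : 0 < d -> n %% (d * 2) \in [:: n %% d; n %% d + d].
Proof.
move=> d_gt0; set t := n %% (d * 2).
have t_mod : t %% d = n %% d by rewrite modn_dvdm ?dvdn_mulr.
have : t %/ d < 2 by rewrite ltn_divLR // mulnC ltn_pmod // muln_gt0 d_gt0.
rewrite {2}(divn_eq t d) t_mod.
by case: (t %/ d) => [|[|]] //= _; rewrite !inE ?mul0n ?mul1n ?add0n addnC eqxx ?orbT.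
Qed.

Lemma dvdn_fact_fact m n : m <= n -> m`! %| n`!.
Proof. by move=> le_mn; rewrite -(ffact_fact (leq_subr m n)) subKn // dvdn_mull. Qed.

Lemma A_odd n : odd (A n) = ~~ odd n.
Proof. by elim: n => [//|n IHn] /=; rewrite oddD oddM IHn /=; case: (odd n). Qed.

Lemma A_shift h n : ~~ odd h -> A (n + h) = A n + n * h %[mod h * 2].
Proof.
move=> even_h; elim: n => [|n IHn].
  rewrite mul0n addn0; case: h even_h => [_ //|h] /= odd_h.
  have /dvdnP [q ->] : 2 %| A h by rewrite dvdn2 A_odd.
  by rewrite mulnCA modnMDl.
rewrite addSn /= -modnDml -modnMmr IHn modnMmr modnDml.
have -> : (n + h).+1 * (A n + n * h) + 1
          = n.+1 * A n + 1 + h * (A n + n * n.+1 + n * h) by ring.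
rewrite [n.+1 * h]mulnC; apply/eqP; rewrite eqn_modDl; apply/eqP.
have [-> | h_gt0] := posnP h; first by rewrite !mul0n.
rewrite -!muln_modr //; congr (h * _).
by rewrite !modn2 !oddD !oddM A_odd /= (negbTE even_h); case: (odd n).
Qed.

Lemma A_add_multiple d r q : ~~ odd d -> A (r + q * d) = A r %[mod d].
Proof.
move=> even_d; elim: q => [|q IHq]; first by rewrite mul0n addn0.
have d_dvd : d %| d * 2 by rewrite dvdn_mulr.
rewrite mulSnr addnA -(modn_dvdm _ d_dvd) A_shift // modn_dvdm //.
by rewrite addnC modnMDl IHq.
Qed.

Lemma A_congr_even d n m : ~~ odd d -> n = m %[mod d] -> A n = A m %[mod d].
Proof.
move=> even_d eq_nm.
by rewrite (divn_eq n d) (divn_eq m d) !(addnC (_ * d)) !A_add_multiple // eq_nm.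
Qed.

Lemma A_congr_exp2 k n m : n = m %[mod 2 ^ k] -> A n = A m %[mod 2 ^ k].
Proof.
case: k => [|k]; first by rewrite !modn1.
by apply: A_congr_even; rewrite oddX.
Qed.

Lemma dvdn_A_lift k r :
  2 ^ k %| A r -> (2 ^ k.+1 %| A (r + 2 ^ k)) = ~~ (2 ^ k.+1 %| A r).
Proof.
case: k => [_|k /dvdnP [a eq_Ar]].
  by rewrite expn1 addn1 !dvdn2 !A_odd /= negbK.
have odd_r : odd r.
  by rewrite -[odd r]negbK -A_odd eq_Ar oddM oddX andbF.
rewrite expnSr (dvdn_congr (A_shift _ _)) ?oddX // eq_Ar -mulnDl.
by rewrite mulnC !dvdn_pmul2r ?expn_gt0 // !dvdn2 oddD odd_r addbT.
Qed.

Fixpoint rootA k : nat :=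
  if k is k'.+1 then
    if 2 ^ k %| A (rootA k') then rootA k' else rootA k' + 2 ^ k'
  else 0.

Lemma rootA_lt k : rootA k < 2 ^ k.
Proof.
elim: k => [//|k IHk] /=; rewrite expnSr muln2 -addnn.
by case: ifP => _; [rewrite ltn_addr | rewrite ltn_add2r].
Qed.

Lemma rootA_modS k : rootA k.+1 %% 2 ^ k = rootA k.
Proof.
by rewrite /=; case: ifP => _; rewrite ?modnDr modn_small ?rootA_lt.
Qed.

Lemma rootA_dvd k : 2 ^ k %| A (rootA k).
Proof.
elim: k => [|k IHk] /=; first exact: dvd1n.
by case: ifP => // /negbT; rewrite -dvdn_A_lift.
Qed.

Lemma rootA_lift k t : t \in [:: rootA k; rootA k + 2 ^ k] ->
  (2 ^ k.+1 %| A t) = (t == rootA k.+1).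
Proof.
have lift := dvdn_A_lift (rootA_dvd k).
have neq : rootA k != rootA k + 2 ^ k.
  by rewrite -{1}[rootA k]addn0 eqn_add2l eq_sym expn_eq0.
rewrite !inE /= => /orP [] /eqP ->; rewrite ?lift.
  by case: ifP => _; rewrite ?eqxx // (negbTE neq).
by case: ifP => _; rewrite ?eqxx // eq_sym (negbTE neq).
Qed.

Lemma dvdn_pow2_A k n : (2 ^ k %| A n) = (n %% 2 ^ k == rootA k).
Proof.
elim: k n => [|k IHk] n; first by rewrite dvd1n modn1.
have dvd_pow : 2 ^ k %| 2 ^ k.+1 by rewrite dvdn_exp2l.
have [low | low] := eqVneq (n %% 2 ^ k) (rootA k); last first.
  apply/idP/eqP => [dvd_n | eq_n]; case/eqP: low.
    by apply/eqP; rewrite -IHk (dvdn_trans dvd_pow dvd_n).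
  by rewrite -(modn_dvdm n dvd_pow) eq_n rootA_modS.
rewrite (dvdn_congr (A_congr_exp2 (esym (modn_mod n _)))) rootA_lift //.
by rewrite -low expnSr modn_mul2 ?expn_gt0.
Qed.

Lemma rootA_unique k n : n < 2 ^ k -> 2 ^ k %| A n -> n = rootA k.
Proof. by move=> lt_n; rewrite dvdn_pow2_A modn_small // => /eqP. Qed.

Lemma Z2_eq (x y : Z2) : (forall k, res x k = res y k) -> x = y.
Proof.
case: x y => [r r_ok] [s s_ok] /= eq_rs.
have r_eq_s : r = s by apply: functional_extensionality.
by subst s; congr exist; apply: proof_irrelevance.
Qed.

Lemma res_lt (x : Z2) k : res x k < 2 ^ k.
Proof. exact: (proj1 (proj2_sig x k)). Qed.

Lemma res_mod (x : Z2) k m : k <= m -> res x m %% 2 ^ k = res x k.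
Proof.
move/subnKC <-; elim: (m - k) => [|i IHi]; first by rewrite addn0 modn_small ?res_lt.
rewrite addnS -(modn_dvdm _ (dvdn_exp2l 2 (leq_addr i k))).
by rewrite (proj2 (proj2_sig x _)) IHi.
Qed.

Lemma res_Z2_of_nat n k : res (Z2_of_nat n) k = n %% 2 ^ k.
Proof. by []. Qed.

Lemma Z2_dist_eq (x y x' y' : Z2) :
  (forall k, (res x k == res y k) = (res x' k == res y' k)) ->
  Z2_dist x y = Z2_dist x' y'.
Proof.
move=> eq_xy; rewrite /Z2_dist.
case: excluded_middle_informative => [ne | all_eq];
  case: excluded_middle_informative => [ne' | all_eq'] //.
- suff -> : ex_minn ne = ex_minn ne' by [].
  apply/eqP; case: ex_minnP => m ne_m min_m; case: ex_minnP => m' ne_m' min_m'.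
  by rewrite eqn_leq min_m ?eq_xy // min_m' -?eq_xy.
- by case: all_eq'; case: ne => k; exists k; rewrite -eq_xy.
- by case: all_eq; case: ne' => k; exists k; rewrite eq_xy.
Qed.

Section Z2Extension.

Variable f : nat -> nat.
Hypothesis f_congr : forall k n m, n = m %[mod 2 ^ k] -> f n = f m %[mod 2 ^ k].

Lemma Z2_ext_compat (x : Z2) k :
  f (res x k) %% 2 ^ k < 2 ^ k /\
  f (res x k.+1) %% 2 ^ k.+1 %% 2 ^ k = f (res x k) %% 2 ^ k.
Proof.
split; first by rewrite ltn_pmod ?expn_gt0.
rewrite modn_dvdm ?dvdn_exp2l //; apply: f_congr.
by rewrite res_mod // modn_small ?res_lt.
Qed.

Definition Z2_ext (x : Z2) : Z2 :=
  exist _ (fun k => f (res x k) %% 2 ^ k) (Z2_ext_compat x).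

Lemma res_Z2_ext x k : res (Z2_ext x) k = f (res x k) %% 2 ^ k.
Proof. by []. Qed.

Lemma Z2_ext_continuous : Z2_continuous Z2_ext.
Proof. by move=> x k; exists k => y eq_xy; rewrite !res_Z2_ext eq_xy. Qed.

Lemma Z2_ext_nat n : Z2_ext (Z2_of_nat n) = Z2_of_nat (f n).
Proof.
by apply: Z2_eq => k; rewrite res_Z2_ext !res_Z2_of_nat; apply: f_congr; rewrite modn_mod.
Qed.

Lemma Z2_ext_unique (G : Z2 -> Z2) :
  Z2_continuous G -> (forall n, G (Z2_of_nat n) = Z2_of_nat (f n)) ->
  forall x, G x = Z2_ext x.
Proof.
move=> G_cont G_nat x; apply: Z2_eq => k; have [m G_m] := G_cont x k.
set y := Z2_of_nat (res x (maxn m k)).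
rewrite -(G_m y) ?res_Z2_of_nat ?res_mod ?leq_maxl // G_nat res_Z2_ext.
rewrite res_Z2_of_nat; apply: f_congr.
by rewrite res_mod ?leq_maxr // modn_small ?res_lt.
Qed.

End Z2Extension.

Definition A2 : Z2 -> Z2 := Z2_ext A_congr_exp2.

Definition rootA2 : Z2 :=
  exist (fun r => forall k, r k < 2 ^ k /\ r k.+1 %% 2 ^ k = r k)
        rootA (fun k => conj (rootA_lt k) (rootA_modS k)).

Lemma res_A2 x k : res (A2 x) k = A (res x k) %% 2 ^ k.
Proof. by []. Qed.

Lemma res_rootA2 k : res rootA2 k = rootA k.
Proof. by []. Qed.

Lemma A2_rootA2 : A2 rootA2 = Z2_of_nat 0.
Proof.
by apply: Z2_eq => k; rewrite res_A2 res_rootA2 res_Z2_of_nat mod0n; apply/eqP/rootA_dvd.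
Qed.

Lemma A2_eq0 z : A2 z = Z2_of_nat 0 -> z = rootA2.
Proof.
move=> A2z0; apply: Z2_eq => k; apply: rootA_unique; first exact: res_lt.
by apply/eqP; move: (congr1 (res^~ k) A2z0); rewrite res_A2 res_Z2_of_nat mod0n.
Qed.

Lemma Z2_abs_A2 x : Z2_abs (A2 x) = Z2_dist x rootA2.
Proof.
apply: Z2_dist_eq => k; rewrite res_A2 res_Z2_of_nat mod0n res_rootA2.
by rewrite -/(dvdn _ _) dvdn_pow2_A modn_small ?res_lt.
Qed.

Lemma rootA2_lim (cs : nat -> nat) :
  (forall k, 1 <= k -> cs k < 2 ^ k /\ 2 ^ k %| A (cs k)) ->
  Z2_lim (fun k => Z2_of_nat (cs k)) rootA2.
Proof.
move=> cs_root k; exists k.+1 => m lt_km.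
have [lt_cs dvd_cs] := cs_root m (leq_ltn_trans (leq0n k) lt_km).
by rewrite res_Z2_of_nat (rootA_unique lt_cs dvd_cs) -res_rootA2 res_mod // ltnW.
Qed.

Lemma Z2_digit_rootA2 i : Z2_digit rootA2 i = ~~ (2 ^ i.+1 %| A (rootA i)).
Proof.
rewrite /Z2_digit res_rootA2 /=; case: ifP => _ /=; first by rewrite divn_small ?rootA_lt.
by rewrite -{1}[2 ^ i]mul1n divnDMl ?expn_gt0 // divn_small ?rootA_lt.
Qed.

Lemma A_sum_ffact n m : n < m -> A n = \sum_(0 <= i < m) n ^_ i.
Proof.
elim: n m => [|n IHn] [|m] // lt_nm; rewrite big_nat_recl // ffactn0.
  by rewrite big1.
by rewrite /= (IHn m lt_nm) big_distrr addnC.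
Qed.

Lemma A_mod_sum_ffact d m n : d %| m`! -> A n = \sum_(i < m) n ^_ i %[mod d].
Proof.
move=> dvd_d; have lt_nM : n < maxn m n.+1 by rewrite leq_maxr.
rewrite (A_sum_ffact lt_nM) (big_cat_nat (leq0n m) (leq_maxl m n.+1)) /=.
suff /eqP dvd_tail : d %| \sum_(m <= i < maxn m n.+1) n ^_ i.
  by rewrite big_mkord -modnDmr dvd_tail addn0.
rewrite big_nat_cond; apply: dvdn_sum => i /andP [/andP [le_mi _] _].
by rewrite -bin_ffact dvdn_mull // (dvdn_trans dvd_d) ?dvdn_fact_fact.
Qed.

Lemma N_of_nat_expn m n : N.of_nat (m ^ n) = (N.of_nat m ^ N.of_nat n)%num.
Proof.
elim: n => [|n IHn]; first by rewrite expn0.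
by rewrite expnS mulnE Nat2N.inj_mul IHn Nat2N.inj_succ N.pow_succ_r //; apply: N.le_0_l.
Qed.

Lemma modn_modulo m d : m %% d = Nat.modulo m d.
Proof.
have [-> | d_gt0] := posnP d; first by rewrite modn0 PeanoNat.Nat.mod_0_r.
apply: (PeanoNat.Nat.mod_unique _ _ (m %/ d)); first exact/ltP/ltn_pmod.
by rewrite -mulnE mulnC plusE -divn_eq.
Qed.

(* Stated with equations: rewriting with the [N.of_nat] lemmas instead makes the
   matcher unfold unary numerals such as [2 ^ 26]. *)
Lemma dvdn_N d m D M :
  N.of_nat d = D -> N.of_nat m = M -> (d %| m) = (M mod D =? 0)%num.
Proof.
move=> <- <-; rewrite /dvdn modn_modulo -Nat2N.inj_mod.
by case: (Nat.modulo m d).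
Qed.

Fixpoint ffactN (x : N) (i : nat) : N :=
  if i is i'.+1 then (x * ffactN (N.pred x) i')%num else 1%num.

Fixpoint sum_ffactN (x : N) (m : nat) : N :=
  if m is m'.+1 then (sum_ffactN x m' + ffactN x m')%num else 0%num.

Lemma N_of_nat_ffact n i : N.of_nat (n ^_ i) = ffactN (N.of_nat n) i.
Proof.
elim: i n => [|i IHi] n; first by rewrite ffactn0.
by rewrite ffactnS mulnE Nat2N.inj_mul IHi Nat2N.inj_pred.
Qed.

Lemma N_of_nat_sum_ffact n m :
  N.of_nat (\sum_(i < m) n ^_ i) = sum_ffactN (N.of_nat n) m.
Proof.
elim: m => [|m IHm]; first by rewrite big_ord0.
by rewrite big_ord_recr /= -IHm -N_of_nat_ffact -Nat2N.inj_add addnE.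
Qed.

Lemma dvdn_exp2_26_fact30 : 2 ^ 26 %| 30`!.
Proof.
by rewrite -ffactnn (dvdn_N (N_of_nat_expn 2 26) (N_of_nat_ffact 30 30)); vm_compute.
Qed.

Definition dvdA_N (k : nat) (x : N) : bool :=
  (sum_ffactN x 30 mod 2 ^ N.of_nat k =? 0)%num.

Lemma dvdn_pow2_A_N k n : k <= 26 -> (2 ^ k %| A n) = dvdA_N k (N.of_nat n).
Proof.
move=> le_k26; have := congr1 (modn^~ (2 ^ k)) (A_mod_sum_ffact n dvdn_exp2_26_fact30).
rewrite !modn_dvdm ?dvdn_exp2l // => /dvdn_congr ->.
exact: dvdn_N (N_of_nat_expn 2 k) (N_of_nat_sum_ffact n 30).
Qed.

(* The [let] shares the recursive call between the test and the result;
   without it evaluation is exponential in [k]. *)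
Fixpoint rootAN (k : nat) : N :=
  if k is k'.+1 then
    let c := rootAN k' in if dvdA_N k c then c else (c + 2 ^ N.of_nat k')%num
  else 0%num.

Lemma rootAN_S k : rootAN k.+1 =
  if dvdA_N k.+1 (rootAN k) then rootAN k else (rootAN k + 2 ^ N.of_nat k)%num.
Proof. reflexivity. Qed.

Lemma N_of_nat_rootA k : k <= 26 -> N.of_nat (rootA k) = rootAN k.
Proof.
elim: k => [//|k IHk] lt_k26; have IH := IHk (ltnW lt_k26).
rewrite [rootA _]/= rootAN_S (dvdn_pow2_A_N _ lt_k26) IH.
by case: ifP => // _; rewrite Nat2N.inj_add IH N_of_nat_expn.
Qed.

Lemma rootAN_digits :
  [seq nat_of_bool (~~ dvdA_N i.+1 (rootAN i)) | i <- iota 0 26] = c_digits.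
Proof. by vm_compute. Qed.

Lemma rootA2_digits i : i < size c_digits -> Z2_digit rootA2 i = nth 0 c_digits i.
Proof.
move=> lt_i; rewrite -rootAN_digits (nth_map 0) ?size_iota // nth_iota // add0n.
by rewrite Z2_digit_rootA2 dvdn_pow2_A_N // N_of_nat_rootA // ltnW.
Qed.

Theorem propositionA10 :
  (forall k : nat, 1 <= k -> exists! ck : nat, ck < 2 ^ k /\ 2 ^ k %| A ck) /\
  exists (At : Z2 -> Z2) (c : Z2),
    [/\ Z2_continuous At,
        (forall n : nat, At (Z2_of_nat n) = Z2_of_nat (A n)) &
        (forall G : Z2 -> Z2, Z2_continuous G ->
           (forall n : nat, G (Z2_of_nat n) = Z2_of_nat (A n)) ->
           forall x, G x = At x)] /\
    [/\ (forall cs : nat -> nat,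
           (forall k, 1 <= k -> cs k < 2 ^ k /\ 2 ^ k %| A (cs k)) ->
           Z2_lim (fun k => Z2_of_nat (cs k)) c),
        At c = Z2_of_nat 0,
        (forall z : Z2, At z = Z2_of_nat 0 -> z = c),
        (forall i : nat, i < size c_digits -> Z2_digit c i = nth 0 c_digits i) &
        forall n : Z2, Z2_abs (At n) = Z2_dist n c].
Proof.
split.
  move=> k _; exists (rootA k); split; first by split; [exact: rootA_lt | exact: rootA_dvd].
  by move=> n [lt_n dvd_n]; rewrite (rootA_unique lt_n dvd_n).
exists A2, rootA2; split; first split.
- exact: Z2_ext_continuous.
- exact: Z2_ext_nat.
- exact: Z2_ext_unique.
split.
- exact: rootA2_lim.
- exact: A2_rootA2.
- exact: A2_eq0.
- exact: rootA2_digits.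
- exact: Z2_abs_A2.
Qed.
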